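(* Let $a,b,c,d>0$ with $a+c\le b+d$, let $\mu\in(0,1]$ and $u>(c+d)/2$, and consider on $\mathcal{I}=[0,1]^2$ the controlled system $$\dot x=x(1-x)\big[xr(-c+d-a+b)+x(a-b)-r(d+b)+b+u\big]+\mu(1-2x),\qquad \dot r=r(1-r)(2x-1).$$ Let $(x_t^*,1)$ be the equilibrium on the side $\{r=1\}$ with $x_t^*\in(1/2,1)$. Then $(x_t^*,1)$ is almost globally stable.
   Context: For these parameters there is exactly one equilibrium $(x_t^*,1)$ on $\mathcal{B}_t=\{(x,1):x\in[0,1]\}$ with $x_t^*\in(1/2,1)$. An equilibrium is almost globally stable if it is asymptotically stable and every trajectory starting in $\mathcal{I}\setminus(\mathcal{B}_t\cup\mathcal{B}_b)$ converges to it, where $\mathcal{B}_b=\{(x,0):x\in[0,1]\}$. *)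

From Stdlib Require Import Reals.
Open Scope R_scope.

Definition fx (a b c d mu u : R) (x r : R) : R :=
  x * (1 - x) * (x * r * (- c + d - a + b) + x * (a - b) - r * (d + b) + b + u)
  + mu * (1 - 2 * x).

Definition fr (x r : R) : R := r * (1 - r) * (2 * x - 1).

Definition in_I (x r : R) : Prop := 0 <= x <= 1 /\ 0 <= r <= 1.

Definition in_Bt (x r : R) : Prop := 0 <= x <= 1 /\ r = 1.
Definition in_Bb (x r : R) : Prop := 0 <= x <= 1 /\ r = 0.

Definition dist2 (x r x' r' : R) : R := sqrt ((x - x') ^ 2 + (r - r') ^ 2).

Definition is_trajectory (a b c d mu u : R) (X Rr : R -> R) : Prop :=
  (forall t, 0 <= t -> continuity_pt X t /\ continuity_pt Rr t) /\
  (forall t, 0 < t ->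
     derivable_pt_lim X t (fx a b c d mu u (X t) (Rr t)) /\
     derivable_pt_lim Rr t (fr (X t) (Rr t))).

Definition converges_to (X Rr : R -> R) (xe re : R) : Prop :=
  forall eps, 0 < eps -> exists T, forall t, T <= t -> dist2 (X t) (Rr t) xe re < eps.

Definition lyap_stable (a b c d mu u xe re : R) : Prop :=
  forall eps, 0 < eps -> exists delta, 0 < delta /\
    forall X Rr, is_trajectory a b c d mu u X Rr -> in_I (X 0) (Rr 0) ->
      dist2 (X 0) (Rr 0) xe re < delta ->
      forall t, 0 <= t -> dist2 (X t) (Rr t) xe re < eps.

Definition asymp_stable (a b c d mu u xe re : R) : Prop :=
  lyap_stable a b c d mu u xe re /\
  exists delta, 0 < delta /\
    forall X Rr, is_trajectory a b c d mu u X Rr -> in_I (X 0) (Rr 0) ->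
      dist2 (X 0) (Rr 0) xe re < delta -> converges_to X Rr xe re.

Definition almost_globally_stable (a b c d mu u xe re : R) : Prop :=
  asymp_stable a b c d mu u xe re /\
  forall X Rr, is_trajectory a b c d mu u X Rr ->
    in_I (X 0) (Rr 0) -> ~ in_Bt (X 0) (Rr 0) -> ~ in_Bb (X 0) (Rr 0) ->
    converges_to X Rr xe re.

(* Every invariance and monotonicity step is an instance of one barrier principle: a continuous
   function whose derivative is nonpositive (or at most K times itself) whenever its value lies in
   [0, eta] cannot become positive.

   On the unit square r' = r (1 - r) (2x - 1), so r increases exactly when x > 1/2.  Since
   u > (c + d) / 2, x' is bounded below by a positive constant on a band around x = 1/2, hence
   once x exceeds 1/2 it never returns.  If x stayed below 1/2 forever, r would decay
   exponentially, and for small r the flow again pushes x above 1/2.  To the right of 1/2 the gap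
   1 - r decays exponentially, while on the side r = 1 the x-component factors as k (x) (xs - x)
   with k bounded below by a positive constant; the error made by replacing r with 1 is
   O(1 - r), so x converges to xs.  Lyapunov stability follows from the same two bounds. *)

From Stdlib Require Import Reals Lra Psatz Classical.
From Coquelicot Require Import Coquelicot.
Open Scope R_scope.

Definition has_derivative_from (t0 : R) (F dF : R -> R) : Prop :=
  (forall t, t0 <= t -> continuity_pt F t) /\
  (forall t, t0 < t -> derivable_pt_lim F t (dF t)).

Lemma has_derivative_from_later t0 t1 F dF :
  t0 <= t1 -> has_derivative_from t0 F dF -> has_derivative_from t1 F dF.
Proof. intros H01 [Fc Fd]; split; intros t Ht; [apply Fc | apply Fd]; lra. Qed.

Lemma has_derivative_from_affine t0 F dF k c :
  has_derivative_from t0 F dF ->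
  has_derivative_from t0 (fun t => k * F t + c) (fun t => k * dF t).
Proof.
  intros [Fc Fd]; split; intros t Ht.
  - apply (continuity_pt_plus (mult_real_fct k F) (fct_cte c)).
    + apply continuity_pt_scal, Fc, Ht.
    + apply continuity_pt_const; intros ? ?; reflexivity.
  - replace (k * dF t) with (k * dF t + 0) by ring.
    apply (derivable_pt_lim_plus (mult_real_fct k F) (fct_cte c)).
    + apply derivable_pt_lim_scal, Fd, Ht.
    + apply derivable_pt_lim_const.
Qed.

Lemma has_derivative_from_mult t0 F dF w dw :
  has_derivative_from t0 F dF -> (forall t, derivable_pt_lim w t (dw t)) ->
  has_derivative_from t0 (fun t => F t * w t) (fun t => dF t * w t + F t * dw t).
Proof.
  intros [Fc Fd] Hw; split; intros t Ht.
  - apply (continuity_pt_mult F w); [apply Fc, Ht|].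
    apply derivable_continuous_pt; exists (dw t); apply Hw.
  - apply (derivable_pt_lim_mult F w); [apply Fd, Ht | apply Hw].
Qed.

Lemma derivable_pt_lim_exp_affine k t0 t :
  derivable_pt_lim (fun s => exp (k * (s - t0))) t (k * exp (k * (t - t0))).
Proof. apply is_derive_Reals; auto_derive; [exact I | unfold Rminus; ring]. Qed.

Lemma increment_ge_of_deriv_ge t0 F dF a b m :
  has_derivative_from t0 F dF -> t0 <= a <= b ->
  (forall t, a <= t <= b -> m <= dF t) -> m * (b - a) <= F b - F a.
Proof.
  intros [Fc Fd] Hab Hm.
  destruct (MVT_gen F a b dF) as [c [Hc ->]]; rewrite Rmin_left, Rmax_right in * by lra.
  - intros t Ht; apply is_derive_Reals, Fd; lra.
  - intros t Ht; apply Fc; lra.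
  - apply Rmult_le_compat_r; [lra | apply Hm, Hc].
Qed.

Lemma continuity_pt_ball f x eps :
  continuity_pt f x -> 0 < eps ->
  exists del, 0 < del /\ forall y, Rabs (y - x) < del -> Rabs (f y - f x) < eps.
Proof.
  intros Hf Heps; destruct (Hf eps Heps) as [del [Hdel Hnear]].
  exists del; split; [exact Hdel|]; intros y Hy.
  destruct (Req_dec y x) as [->|Hne].
  - rewrite Rminus_diag, Rabs_R0; exact Heps.
  - apply Hnear; repeat split; auto.
Qed.

Lemma last_zero_before h t0 t :
  t0 <= t -> (forall s, t0 <= s <= t -> continuity_pt h s) -> h t0 <= 0 -> 0 < h t ->
  exists s, t0 <= s < t /\ h s = 0 /\ forall s', s < s' <= t -> 0 < h s'.
Proof.
  intros Htt0 hc H0 Ht.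
  set (E := fun s => t0 <= s <= t /\ h s <= 0).
  destruct (completeness E) as [s [Hub Hlub]].
  - exists t; intros s [Hs _]; lra.
  - exists t0; split; lra.
  assert (Hs : t0 <= s <= t).
  { split; [apply Hub; split; lra | apply Hlub; intros s' [Hs' _]; lra]. }
  assert (Hafter : forall s', s < s' <= t -> 0 < h s').
  { intros s' Hs'; apply Rnot_le_lt; intros Hle.
    assert (s' <= s) by (apply Hub; split; lra); lra. }
  assert (Hhs : h s = 0).
  { destruct (Rtotal_order (h s) 0) as [Hneg|[Hz|Hpos]]; [exfalso| exact Hz | exfalso].
    - destruct (continuity_pt_ball h s (- h s)) as [del [Hdel Hnear]]; [apply hc, Hs | lra |].
      assert (Hst : s < t) by (destruct (Req_dec s t); subst; lra).
      set (s' := Rmin t (s + del / 2)).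
      assert (Hs' : s < s' <= t /\ s' - s < del)
        by (unfold s'; apply Rmin_case_strong; intros; lra).
      specialize (Hnear s' ltac:(rewrite Rabs_right; lra)).
      specialize (Hafter s' ltac:(lra)).
      apply Rabs_def2 in Hnear; lra.
    - destruct (continuity_pt_ball h s (h s)) as [del [Hdel Hnear]]; [apply hc, Hs | lra |].
      enough (s <= s - del / 2) by lra.
      apply Hlub; intros s' [Hs' Hhs'].
      apply Rnot_lt_le; intros Hlt.
      assert (s' <= s) by (apply Hub; split; assumption).
      specialize (Hnear s' ltac:(rewrite Rabs_left1; lra)).
      apply Rabs_def2 in Hnear; lra. }
  assert (s <> t) by (intros ->; lra).
  exists s; repeat split; auto; lra.
Qed.

Lemma barrier_nonpos t0 h dh T eta :
  has_derivative_from t0 h dh -> 0 < eta ->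
  (forall t, t0 <= t <= T -> 0 <= h t <= eta -> dh t <= 0) ->
  h t0 <= 0 -> forall t, t0 <= t <= T -> h t <= 0.
Proof.
  intros Hh Heta Hdh H0 t Ht.
  apply Rnot_lt_le; intros Hpos.
  destruct (last_zero_before h t0 t) as [s [Hs [Hs0 Hafter]]]; try lra.
  { intros s Hs; apply (proj1 Hh); lra. }
  destruct (continuity_pt_ball h s eta) as [del [Hdel Hnear]]; [apply (proj1 Hh); lra | lra |].
  set (tau := Rmin t (s + del / 2)).
  assert (Htau : s < tau <= t /\ tau - s < del)
    by (unfold tau; apply Rmin_case_strong; intros; lra).
  assert (Hinc : 0 * (tau - s) <= (-1 * h tau + 0) - (-1 * h s + 0)).
  { apply (increment_ge_of_deriv_ge t0 _ _ _ _ _ (has_derivative_from_affine _ _ _ (-1) 0 Hh));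
      [lra|].
    intros c Hc.
    enough (dh c <= 0) by lra.
    apply Hdh; [lra|].
    destruct (Req_dec c s) as [->|Hne]; [lra|].
    specialize (Hnear c ltac:(rewrite Rabs_right; lra)).
    specialize (Hafter c ltac:(lra)).
    apply Rabs_def2 in Hnear; lra. }
  specialize (Hafter tau ltac:(lra)); lra.
Qed.

Lemma gronwall_barrier t0 h dh K T eta :
  has_derivative_from t0 h dh -> 0 <= K -> 0 < eta ->
  (forall t, t0 <= t <= T -> 0 <= h t <= eta -> dh t <= K * h t) ->
  h t0 <= 0 -> forall t, t0 <= t <= T -> h t <= 0.
Proof.
  intros Hh HK Heta Hdh H0.
  set (w := fun t => exp (- K * (t - t0))).
  assert (Hw : forall t, 0 < w t) by (intros; apply exp_pos).
  assert (Hg := has_derivative_from_mult t0 h dh w _ Hh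
                  (derivable_pt_lim_exp_affine (- K) t0)).
  enough (Hneg : forall t, t0 <= t <= T -> h t * w t <= 0).
  { intros t Ht; specialize (Hneg t Ht); specialize (Hw t); nra. }
  apply (barrier_nonpos t0 _ _ T (eta * w T) Hg).
  - apply Rmult_lt_0_compat; auto.
  - intros t Ht [Hg0 HgT]; specialize (Hw t).
    assert (HwT : w T <= w t).
    { assert (Hexp : - K * (T - t0) <= - K * (t - t0)) by nra.
      destruct (Rle_lt_or_eq_dec _ _ Hexp) as [Hlt | Heq].
      - left; apply exp_increasing, Hlt.
      - unfold w; rewrite Heq; lra. }
    assert (0 <= h t) by nra.
    assert (h t <= eta) by nra.
    specialize (Hdh t Ht ltac:(lra)).
    replace (dh t * w t + h t * (- K * exp (- K * (t - t0))))
      with ((dh t - K * h t) * w t) by (unfold w; ring).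
    nra.
  - unfold w; rewrite Rminus_diag, Rmult_0_r, exp_0; lra.
Qed.

Lemma le_initial_of_deriv_nonpos t0 F dF :
  has_derivative_from t0 F dF -> (forall t, t0 <= t -> dF t <= 0) ->
  forall t, t0 <= t -> F t <= F t0.
Proof.
  intros HF HdF t Ht.
  assert (H := increment_ge_of_deriv_ge t0 _ _ t0 t 0 (has_derivative_from_affine _ _ _ (-1) 0 HF)).
  enough (0 * (t - t0) <= (-1 * F t + 0) - (-1 * F t0 + 0)) by lra.
  apply H; [lra|]; intros s Hs; specialize (HdF s ltac:(lra)); lra.
Qed.

Lemma le_exp_decay t0 F dF K :
  has_derivative_from t0 F dF -> (forall t, t0 <= t -> dF t <= - K * F t) ->
  forall t, t0 <= t -> F t <= F t0 * exp (- K * (t - t0)).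
Proof.
  intros HF HdF t Ht.
  set (w := fun t => exp (K * (t - t0))).
  assert (HG := has_derivative_from_mult t0 F dF w _ HF (derivable_pt_lim_exp_affine K t0)).
  assert (Hle := le_initial_of_deriv_nonpos t0 _ _ HG).
  specialize (Hle ltac:(intros s Hs; specialize (HdF s Hs); unfold w;
                        pose proof (exp_pos (K * (s - t0))); nra) t Ht).
  unfold w in Hle; rewrite Rminus_diag, Rmult_0_r, exp_0, Rmult_1_r in Hle.
  replace (F t) with (F t * exp (K * (t - t0)) * exp (- K * (t - t0))).
  - apply Rmult_le_compat_r; [left; apply exp_pos | exact Hle].
  - rewrite Rmult_assoc, <- exp_plus.
    replace (K * (t - t0) + - K * (t - t0)) with 0 by ring.
    rewrite exp_0; ring.
Qed.

Lemma exp_decay_eventually_le t0 K gam :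
  0 < K -> 0 < gam -> exists T, t0 <= T /\ forall t, T <= t -> exp (- K * (t - t0)) <= gam.
Proof.
  intros HK Hgam.
  assert (HKg : 0 < K * gam) by (apply Rmult_lt_0_compat; auto).
  exists (t0 + / (K * gam)); split.
  - pose proof (Rinv_0_lt_compat _ HKg); lra.
  - intros t Ht.
    assert (Hlin : 1 <= K * gam * (t - t0)).
    { replace 1 with (K * gam * / (K * gam)) by (field; lra).
      apply Rmult_le_compat_l; lra. }
    set (E := exp (K * (t - t0))).
    assert (HE : 1 + K * (t - t0) <= E) by apply exp_ineq1_le.
    assert (Hinv : E * exp (- K * (t - t0)) = 1).
    { unfold E; rewrite <- exp_plus.
      replace (K * (t - t0) + - K * (t - t0)) with 0 by ring; apply exp_0. }
    assert (HgE : 1 <= gam * E) by nra.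
    pose proof (exp_pos (- K * (t - t0))); pose proof (exp_pos (K * (t - t0))); nra.
Qed.

Lemma reaches_above t0 F dF m L :
  has_derivative_from t0 F dF -> 0 < m ->
  (forall t, t0 <= t -> F t <= L -> m <= dF t) -> exists t, t0 <= t /\ L < F t.
Proof.
  intros HF Hm HdF.
  apply NNPP; intros Hnot.
  assert (Hbelow : forall t, t0 <= t -> F t <= L)
    by (intros t Ht; apply Rnot_lt_le; intros Hlt; apply Hnot; exists t; auto).
  set (t1 := t0 + (L - F t0) / m + 1).
  assert (Ht1 : t0 <= t1).
  { assert (0 <= (L - F t0) / m) by (apply Rdiv_le_0_compat; [specialize (Hbelow t0); lra | lra]).
    unfold t1; lra. }
  assert (Hinc := increment_ge_of_deriv_ge t0 F dF t0 t1 m HF ltac:(lra)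
                    ltac:(intros s Hs; apply HdF, Hbelow; lra)).
  replace (m * (t1 - t0)) with (L - F t0 + m) in Hinc by (unfold t1; field; lra).
  specialize (Hbelow t1 Ht1); lra.
Qed.

Lemma stays_above t0 F dF eta L :
  has_derivative_from t0 F dF -> 0 < eta ->
  (forall t, t0 <= t -> L - eta <= F t <= L -> 0 <= dF t) ->
  L <= F t0 -> forall t, t0 <= t -> L <= F t.
Proof.
  intros HF Heta HdF H0 t Ht.
  enough (-1 * F t + L <= 0) by lra.
  apply (barrier_nonpos t0 _ _ t eta (has_derivative_from_affine _ _ _ (-1) L HF)); try lra.
  intros s Hs Hh; specialize (HdF s ltac:(lra) ltac:(lra)); lra.
Qed.

Lemma eventually_above t0 F dF m L :
  has_derivative_from t0 F dF -> 0 < m ->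
  (forall t, t0 <= t -> F t <= L -> m <= dF t) ->
  exists T, t0 <= T /\ forall t, T <= t -> L <= F t.
Proof.
  intros HF Hm HdF.
  destruct (reaches_above t0 F dF m L HF Hm HdF) as [T [HT HLT]].
  exists T; split; [exact HT|].
  intros t Ht.
  apply (stays_above T F dF 1 L (has_derivative_from_later _ _ _ _ HT HF)); try lra.
  intros s Hs HFs; specialize (HdF s ltac:(lra) ltac:(lra)); lra.
Qed.

Lemma bounded_on_interval g t0 t :
  t0 <= t -> (forall s, t0 <= s <= t -> continuity_pt g s) ->
  exists M, 0 <= M /\ forall s, t0 <= s <= t -> Rabs (g s) <= M.
Proof.
  intros Ht gc.
  destruct (continuity_ab_maj g t0 t Ht gc) as [smax [Hmax _]].
  destruct (continuity_ab_min g t0 t Ht gc) as [smin [Hmin _]].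
  exists (Rabs (g smax) + Rabs (g smin)); split.
  - pose proof (Rabs_pos (g smax)); pose proof (Rabs_pos (g smin)); lra.
  - intros s Hs; specialize (Hmax s Hs); specialize (Hmin s Hs).
    apply Rabs_le_between.
    pose proof (Rle_abs (g smax)); pose proof (Rabs_pos (g smax)).
    pose proof (Rle_abs (- g smin)); rewrite Rabs_Ropp in *; pose proof (Rabs_pos (g smin)).
    lra.
Qed.

Lemma dist2_lt_of_Rabs_le x r x' r' e :
  0 < e -> Rabs (x - x') <= e / 2 -> Rabs (r - r') <= e / 2 -> dist2 x r x' r' < e.
Proof.
  intros He Hx Hr; unfold dist2.
  rewrite <- (sqrt_pow2 e) by lra.
  apply Rabs_le_between in Hx, Hr.
  assert ((x - x') ^ 2 <= (e / 2) ^ 2) by nra.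
  assert ((r - r') ^ 2 <= (e / 2) ^ 2) by nra.
  pose proof (pow2_ge_0 (x - x')); pose proof (pow2_ge_0 (r - r')).
  apply sqrt_lt_1_alt; split; nra.
Qed.

Lemma Rabs_lt_of_dist2_lt x r x' r' e :
  dist2 x r x' r' < e -> Rabs (x - x') < e /\ Rabs (r - r') < e.
Proof.
  unfold dist2; intros H.
  pose proof (pow2_ge_0 (x - x')); pose proof (pow2_ge_0 (r - r')).
  split; (eapply Rle_lt_trans; [|exact H]);
    rewrite <- sqrt_Rsqr_abs; apply sqrt_le_1_alt; unfold Rsqr; simpl in *; lra.
Qed.

Lemma small_positive_bound e m D :
  0 < e -> 0 < m -> 0 < D -> exists g, 0 < g /\ g <= e /\ g * D <= m.
Proof.
  intros He Hm HD.
  exists (Rmin e (m / D)); repeat split.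
  - apply Rmin_case; [lra | apply Rdiv_lt_0_compat; lra].
  - apply Rmin_l.
  - apply (Rle_trans _ (m / D * D)); [apply Rmult_le_compat_r; [lra | apply Rmin_r]|].
    right; field; lra.
Qed.

Section VectorField.

Variables a b c d mu u : R.
Hypotheses (Ha : 0 < a) (Hb : 0 < b) (Hc : 0 < c) (Hd : 0 < d) (Hmu : 0 < mu)
  (Hu : (c + d) / 2 < u).

Local Notation f := (fx a b c d mu u).

Lemma fx_linear_near_edges M :
  0 <= M -> exists K, 0 <= K /\ forall x r, Rabs r <= M ->
    (1 <= x <= 2 -> f x r <= K * (x - 1)) /\ (-1 <= x <= 0 -> K * x <= f x r).
Proof.
  intros HM.
  set (S := a + b + c + d).
  set (C := 3 * M * S + 2 * S + b + u).
  exists (2 * C); split; [unfold C, S; nra|].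
  intros x r Hr.
  set (H := x * r * (- c + d - a + b) + x * (a - b) - r * (d + b) + b + u).
  assert (HH : Rabs x <= 2 -> - C <= H <= C).
  { intros Hx.
    assert (Hxr : Rabs (x * r) <= 2 * M)
      by (rewrite Rabs_mult; apply Rmult_le_compat; auto using Rabs_pos).
    assert (Hxra : Rabs (x * r * (- c + d - a + b)) <= 2 * M * S).
    { rewrite Rabs_mult; apply Rmult_le_compat; auto using Rabs_pos.
      apply Rabs_le; unfold S; lra. }
    assert (Hxb : Rabs (x * (a - b)) <= 2 * S).
    { rewrite Rabs_mult; apply Rmult_le_compat; auto using Rabs_pos.
      apply Rabs_le; unfold S; lra. }
    assert (Hrg : Rabs (r * (d + b)) <= M * S).
    { rewrite Rabs_mult; apply Rmult_le_compat; auto using Rabs_pos.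
      apply Rabs_le; unfold S; lra. }
    apply Rabs_le_between in Hxra, Hxb, Hrg.
    unfold H, C; lra. }
  assert (Hf : f x r = x * (1 - x) * H + mu * (1 - 2 * x)) by (unfold fx, H; ring).
  rewrite Hf; split; intros Hx.
  - destruct (HH ltac:(apply Rabs_le_between; lra)).
    assert (x * - H <= 2 * C) by nra.
    assert ((x - 1) * (x * - H) <= (x - 1) * (2 * C)) by (apply Rmult_le_compat_l; lra).
    nra.
  - destruct (HH ltac:(apply Rabs_le_between; lra)).
    assert ((1 - x) * H <= 2 * C) by nra.
    assert (- x * ((1 - x) * H) <= - x * (2 * C)) by (apply Rmult_le_compat_l; lra).
    nra.
Qed.

Lemma fx_sandwich_top x r :
  0 <= x <= 1 -> r <= 1 -> f x 1 <= f x r <= f x 1 + (1 - r) * ((a + b + c + d) / 4).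
Proof.
  intros Hx Hr.
  set (W := (1 - x) * (b + d) + x * (a + c)).
  assert (Hf : f x r = f x 1 + (1 - r) * (x * (1 - x) * W)) by (unfold fx, W; ring).
  assert (HP : 0 <= x * (1 - x) <= 1 / 4) by (pose proof (pow2_ge_0 (x - 1 / 2)); split; nra).
  assert (HW : 0 <= W <= a + b + c + d) by (unfold W; split; nra).
  assert (HPW : 0 <= x * (1 - x) * W <= (a + b + c + d) / 4) by (split; nra).
  rewrite Hf; split; nra.
Qed.

Lemma fx_mid_band :
  exists sig del, 0 < sig /\ 0 < del /\ forall x r,
    1 / 2 - sig <= x <= 1 / 2 + sig -> 0 <= r <= 1 -> del <= f x r.
Proof.
  set (p := u - (c + d) / 2); set (S := a + b + c + d).
  assert (Hp : 0 < p) by (unfold p; lra).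
  set (sig := Rmin (1 / 4) (p / (16 * (S + mu)))).
  assert (Hsig1 : sig <= 1 / 4) by apply Rmin_l.
  assert (Hsig2 : sig * (16 * (S + mu)) <= p).
  { assert (sig <= p / (16 * (S + mu))) by apply Rmin_r.
    apply (Rmult_le_compat_r (16 * (S + mu))) in H; [|unfold S; lra].
    unfold Rdiv in H; rewrite Rmult_assoc, Rinv_l in H by (unfold S; lra); lra. }
  assert (Hsig : 0 < sig)
    by (unfold sig; apply Rmin_case; [lra | apply Rdiv_lt_0_compat; unfold S; lra]).
  exists sig, (p / 32); repeat split; try lra.
  intros x r Hx Hr.
  set (s := x - 1 / 2).
  set (H0 := (a + b) / 2 + u - r * S / 2); set (h1 := (1 - r) * (a - b) + r * (d - c)).
  assert (Hf : f x r = (1 / 4 - s ^ 2) * (H0 + s * h1) - 2 * mu * s)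
    by (unfold fx, s, H0, h1, S; field).
  assert (HH0 : p <= H0) by (unfold H0, p, S; nra).
  assert (Hh1 : - S <= h1 <= S) by (unfold h1, S; split; nra).
  assert (Hs : - sig <= s <= sig) by (unfold s; lra).
  assert (Hsh1 : - (sig * S) <= s * h1) by nra.
  assert (Hs2 : 1 / 4 - s ^ 2 >= 3 / 16) by nra.
  assert (Hmus : 2 * mu * s <= p / 8) by (unfold S in *; nra).
  assert (Hprod : 3 / 16 * (15 * p / 16) <= (1 / 4 - s ^ 2) * (H0 + s * h1))
    by (apply Rmult_le_compat; unfold S in *; nra).
  rewrite Hf; lra.
Qed.

Lemma fx_pos_small_r :
  exists rho m, 0 < rho /\ 0 < m /\ forall x r,
    0 <= x <= 1 / 2 -> 0 <= r <= rho -> m <= f x r.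
Proof.
  set (S := a + b + c + d).
  assert (HS : 0 < S) by (unfold S; lra).
  exists (u / (2 * S)), (Rmin mu (u / 8)); repeat split.
  - apply Rdiv_lt_0_compat; lra.
  - apply Rmin_case; lra.
  - intros x r Hx Hr.
    set (W := (1 - x) * (b + d) + x * (a + c)).
    assert (HW : 0 <= W <= S) by (unfold W, S; split; nra).
    assert (HrW : r * W <= u / 2).
    { apply (Rle_trans _ (u / (2 * S) * S)); [apply Rmult_le_compat; lra|].
      right; field; lra. }
    set (H := (1 - x) * b + x * a + u - r * W).
    assert (Hf : f x r = x * (1 - x) * H + mu * (1 - 2 * x)) by (unfold fx, H, W; ring).
    assert (HH : u / 2 <= H) by (unfold H; nra).
    assert (x / 2 * (u / 2) <= x * (1 - x) * H) by (apply Rmult_le_compat; nra).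
    assert (Hm1 := Rmin_l mu (u / 8)); assert (Hm2 := Rmin_r mu (u / 8)).
    rewrite Hf; nra.
Qed.

Section Trajectory.

Variables X Rr : R -> R.
Hypothesis Htraj : is_trajectory a b c d mu u X Rr.

Lemma trajectory_x_deriv : has_derivative_from 0 X (fun t => f (X t) (Rr t)).
Proof. split; intros t Ht; apply Htraj, Ht. Qed.

Lemma trajectory_r_deriv : has_derivative_from 0 Rr (fun t => fr (X t) (Rr t)).
Proof. split; intros t Ht; apply Htraj, Ht. Qed.

Lemma trajectory_x_unit : 0 <= X 0 <= 1 -> forall t, 0 <= t -> 0 <= X t <= 1.
Proof.
  intros HX0 t Ht.
  destruct (bounded_on_interval Rr 0 t Ht) as [M [HM HRM]].
  { intros s Hs; apply (proj1 trajectory_r_deriv); lra. }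
  destruct (fx_linear_near_edges M HM) as [K [HK HKf]].
  split.
  - enough (-1 * X t + 0 <= 0) by lra.
    apply (gronwall_barrier 0 _ _ K t 1
             (has_derivative_from_affine _ _ _ (-1) 0 trajectory_x_deriv)); try lra.
    intros s Hs Hh; destruct (HKf (X s) (Rr s) (HRM s Hs)) as [_ Hf].
    specialize (Hf ltac:(lra)); lra.
  - enough (1 * X t + -1 <= 0) by lra.
    apply (gronwall_barrier 0 _ _ K t 1
             (has_derivative_from_affine _ _ _ 1 (-1) trajectory_x_deriv)); try lra.
    intros s Hs Hh; destruct (HKf (X s) (Rr s) (HRM s Hs)) as [Hf _].
    specialize (Hf ltac:(lra)); lra.
Qed.

Section InUnitSquare.

Hypothesis HX : forall t, 0 <= t -> 0 <= X t <= 1.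

Lemma trajectory_r_le_1 : Rr 0 <= 1 -> forall t, 0 <= t -> Rr t <= 1.
Proof.
  intros HR0 t Ht.
  enough (1 * Rr t + -1 <= 0) by lra.
  apply (gronwall_barrier 0 _ _ 2 t 1
           (has_derivative_from_affine _ _ _ 1 (-1) trajectory_r_deriv)); try lra.
  intros s Hs Hh; specialize (HX s ltac:(lra)); unfold fr.
  replace (Rr s * (1 - Rr s) * (2 * X s - 1)) with ((Rr s - 1) * (Rr s * (1 - 2 * X s))) by ring.
  assert (Rr s * (1 - 2 * X s) <= 2) by nra.
  assert ((Rr s - 1) * (Rr s * (1 - 2 * X s)) <= (Rr s - 1) * 2)
    by (apply Rmult_le_compat_l; lra).
  lra.
Qed.

Lemma trajectory_r_pos : 0 < Rr 0 <= 1 -> forall t, 0 <= t -> 0 < Rr t.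
Proof.
  intros HR0.
  assert (Hle1 := trajectory_r_le_1 ltac:(lra)).
  assert (Hge0 : forall t, 0 <= t -> 0 <= Rr t).
  { intros t Ht.
    enough (-1 * Rr t + 0 <= 0) by lra.
    apply (gronwall_barrier 0 _ _ 2 t 1
             (has_derivative_from_affine _ _ _ (-1) 0 trajectory_r_deriv)); try lra.
    intros s Hs Hh; specialize (HX s ltac:(lra)); unfold fr.
    assert ((1 - Rr s) * (2 * X s - 1) <= 2) by nra.
    assert (- Rr s * ((1 - Rr s) * (2 * X s - 1)) <= - Rr s * 2)
      by (apply Rmult_le_compat_l; lra).
    lra. }
  (* r' >= -r on the unit square, so r decays at most exponentially *)
  assert (Hdecay := le_exp_decay 0 _ _ 1
                      (has_derivative_from_affine _ _ _ (-1) 0 trajectory_r_deriv)).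
  intros t Ht.
  enough (Rr 0 * exp (-1 * (t - 0)) <= Rr t) by (pose proof (exp_pos (-1 * (t - 0))); nra).
  enough (-1 * Rr t + 0 <= (-1 * Rr 0 + 0) * exp (-1 * (t - 0))) by lra.
  apply Hdecay; [|exact Ht].
  intros s Hs; specialize (HX s Hs); specialize (Hle1 s Hs); specialize (Hge0 s Hs).
  unfold fr.
  assert (0 <= Rr s * (1 - Rr s)) by nra.
  assert (- (Rr s * (1 - Rr s)) <= Rr s * (1 - Rr s) * (2 * X s - 1)) by nra.
  nra.
Qed.

Hypothesis HR : forall t, 0 <= t -> 0 < Rr t <= 1.

Lemma trajectory_crosses_half : Rr 0 < 1 -> exists T0, 0 <= T0 /\ 1 / 2 < X T0.
Proof.
  intros HR0.
  destruct fx_mid_band as [sig [del [Hsig [Hdel Hband]]]].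
  destruct (classic (exists t1, 0 <= t1 /\ 1 / 2 - sig / 2 <= X t1)) as [[t1 [Ht1 HXt1]]|Hlow].
  - assert (HXd := has_derivative_from_later _ _ _ _ Ht1 trajectory_x_deriv).
    assert (Hstay : forall t, t1 <= t -> 1 / 2 - sig / 2 <= X t).
    { apply (stays_above t1 X _ (sig / 2) _ HXd); try lra.
      intros t Ht HXt; specialize (HR t ltac:(lra)).
      assert (del <= f (X t) (Rr t)) by (apply Hband; lra); lra. }
    destruct (reaches_above t1 X _ del (1 / 2) HXd Hdel) as [t [Ht HXt]].
    { intros t Ht HXt; specialize (Hstay t Ht); specialize (HR t ltac:(lra)).
      apply Hband; lra. }
    exists t; split; lra.
  - (* x stays left of the band, so r decays exponentially and x is eventually pushed right *)
    assert (Hleft : forall t, 0 <= t -> X t < 1 / 2 - sig / 2).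
    { intros t Ht; apply Rnot_le_lt; intros Hge; apply Hlow; exists t; auto. }
    assert (Hmono : forall t, 0 <= t -> Rr t <= Rr 0).
    { apply (le_initial_of_deriv_nonpos 0 _ _ trajectory_r_deriv).
      intros t Ht; specialize (Hleft t Ht); specialize (HR t Ht); unfold fr.
      assert (0 <= Rr t * (1 - Rr t)) by nra; nra. }
    set (k := sig * (1 - Rr 0)).
    assert (Hk : 0 < k) by (unfold k; apply Rmult_lt_0_compat; lra).
    assert (Hdecay : forall t, 0 <= t -> Rr t <= Rr 0 * exp (- k * (t - 0))).
    { apply (le_exp_decay 0 _ _ k trajectory_r_deriv).
      intros t Ht; specialize (Hleft t Ht); specialize (HR t Ht); specialize (Hmono t Ht).
      unfold fr, k.
      assert (Hrr : 0 <= Rr t * (1 - Rr 0) <= Rr t * (1 - Rr t)) by (split; nra).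
      assert (Rr t * (1 - Rr t) * (2 * X t - 1) <= Rr t * (1 - Rr t) * (- sig))
        by (apply Rmult_le_compat_l; lra).
      nra. }
    destruct fx_pos_small_r as [rho [m [Hrho [Hm Hsmall]]]].
    destruct (exp_decay_eventually_le 0 k rho Hk Hrho) as [T [HT HTrho]].
    destruct (reaches_above T X _ m (1 / 2)
                (has_derivative_from_later _ _ _ _ HT trajectory_x_deriv) Hm) as [t [Ht HXt]].
    { intros t Ht HXt; specialize (HX t ltac:(lra)); specialize (HR t ltac:(lra)).
      specialize (Hdecay t ltac:(lra)); specialize (HTrho t Ht).
      pose proof (exp_pos (- k * (t - 0))).
      apply Hsmall; [lra|]; split; nra. }
    exists t; split; lra.
Qed.

Lemma trajectory_stays_right T0 :
  0 <= T0 -> 1 / 2 < X T0 ->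
  exists xlo, 1 / 2 < xlo /\ forall t, T0 <= t -> xlo <= X t /\ Rr T0 <= Rr t.
Proof.
  intros HT0 HXT0.
  destruct fx_mid_band as [sig [del [Hsig [Hdel Hband]]]].
  set (xlo := Rmin (X T0) (1 / 2 + sig / 2)).
  assert (Hxlo : 1 / 2 < xlo <= X T0 /\ xlo <= 1 / 2 + sig / 2)
    by (unfold xlo; apply Rmin_case_strong; intros; lra).
  assert (Hright : forall t, T0 <= t -> xlo <= X t).
  { apply (stays_above T0 X _ (sig / 2) _
             (has_derivative_from_later _ _ _ _ HT0 trajectory_x_deriv)); try lra.
    intros t Ht HXt; specialize (HR t ltac:(lra)).
    assert (del <= f (X t) (Rr t)) by (apply Hband; lra); lra. }
  exists xlo; split; [lra|]; intros t Ht; split; [apply Hright, Ht|].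
  enough (-1 * Rr t + 0 <= -1 * Rr T0 + 0) by lra.
  apply (le_initial_of_deriv_nonpos T0 _ _
           (has_derivative_from_affine _ _ _ (-1) 0
              (has_derivative_from_later _ _ _ _ HT0 trajectory_r_deriv))); [|exact Ht].
  intros s Hs; specialize (Hright s Hs); specialize (HR s ltac:(lra)); unfold fr.
  assert (0 <= Rr s * (1 - Rr s)) by nra; nra.
Qed.

Lemma trajectory_r_eventually_near_1 T0 :
  0 <= T0 -> 1 / 2 < X T0 ->
  forall gam, 0 < gam -> exists T, T0 <= T /\ forall t, T <= t -> 1 - gam <= Rr t.
Proof.
  intros HT0 HXT0 gam Hgam.
  destruct (trajectory_stays_right T0 HT0 HXT0) as [xlo [Hxlo Hright]].
  assert (HR0 := HR T0 HT0).
  set (k := (2 * xlo - 1) * Rr T0).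
  assert (Hk : 0 < k) by (unfold k; apply Rmult_lt_0_compat; lra).
  assert (Hdecay : forall t, T0 <= t -> -1 * Rr t + 1 <= (-1 * Rr T0 + 1) * exp (- k * (t - T0))).
  { apply (le_exp_decay T0 _ _ k
             (has_derivative_from_affine _ _ _ (-1) 1
                (has_derivative_from_later _ _ _ _ HT0 trajectory_r_deriv))).
    intros t Ht; destruct (Hright t Ht) as [HXt HRt]; specialize (HR t ltac:(lra)).
    unfold fr, k.
    assert (Rr T0 * (2 * xlo - 1) <= Rr t * (2 * X t - 1)) by (apply Rmult_le_compat; lra).
    assert ((1 - Rr t) * (Rr T0 * (2 * xlo - 1)) <= (1 - Rr t) * (Rr t * (2 * X t - 1)))
      by (apply Rmult_le_compat_l; lra).
    nra. }
  destruct (exp_decay_eventually_le T0 k gam Hk Hgam) as [T [HT HTgam]].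
  exists T; split; [exact HT|]; intros t Ht.
  specialize (Hdecay t ltac:(lra)); specialize (HTgam t Ht).
  pose proof (exp_pos (- k * (t - T0))); nra.
Qed.

End InUnitSquare.

Lemma trajectory_in_unit_square :
  0 <= X 0 <= 1 -> 0 < Rr 0 <= 1 ->
  (forall t, 0 <= t -> 0 <= X t <= 1) /\ (forall t, 0 <= t -> 0 < Rr t <= 1).
Proof.
  intros HX0 HR0.
  assert (HX := trajectory_x_unit HX0).
  split; [exact HX|]; intros t Ht; split.
  - exact (trajectory_r_pos HX HR0 t Ht).
  - exact (trajectory_r_le_1 HX ltac:(lra) t Ht).
Qed.

End Trajectory.

Section TopEquilibrium.

Variable xs : R.
Hypotheses (Hxs : 1 / 2 < xs < 1) (Hfxs : f xs 1 = 0).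

Lemma fx_top_factor :
  exists q, 0 < q /\ forall x, 1 / 2 <= x <= 1 -> exists k, q <= k /\ f x 1 = k * (xs - x).
Proof.
  set (ys := 2 * xs - 1); set (p := u - (c + d) / 2); set (q := (d - c) / 2).
  assert (Hys : 0 < ys < 1) by (unfold ys; lra).
  assert (Hp : 0 < p) by (unfold p; lra).
  assert (Hpq : 0 < p + q * ys).
  { assert (E : 4 * f xs 1 = (1 - ys ^ 2) * (p + q * ys) - 4 * mu * ys)
      by (unfold fx, ys, p, q; field).
    rewrite Hfxs in E.
    assert (0 < 1 - ys ^ 2) by nra; assert (0 < mu * ys) by nra.
    apply Rnot_le_lt; intros Hle.
    assert ((1 - ys ^ 2) * (p + q * ys) <= 0) by (apply Rmult_le_0_l; lra).
    lra. }
  set (Q := fun y => p + p * y * ys + q * y * ys * (y + ys)).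
  assert (HQ : forall x, 2 * ys * f x 1 = (xs - x) * Q (2 * x - 1)).
  { intros x; transitivity ((xs - x) * Q (2 * x - 1) + 2 * (2 * x - 1) * f xs 1).
    - unfold fx, Q, ys, p, q; field.
    - rewrite Hfxs; ring. }
  set (m := Rmin p ((1 + ys) * (p + q * ys))).
  assert (Hm : 0 < m) by (unfold m; apply Rmin_case; nra).
  (* Q 0 = p and Q 1 = (1 + ys) (p + q ys); Q increases on [0, 1] if q >= 0, else it is concave *)
  assert (HQm : forall y, 0 <= y <= 1 -> m <= Q y).
  { intros y Hy.
    assert (Hm1 : m <= p) by apply Rmin_l.
    assert (Hm2 : m <= (1 + ys) * (p + q * ys)) by apply Rmin_r.
    assert (Hyys : 0 <= y * ys) by nra.
    unfold Q; destruct (Rle_or_lt 0 q).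
    { assert (0 <= q * (y * ys) * (y + ys)) by (apply Rmult_le_pos; nra). nra. }
    assert (0 <= - q * ys * (y * (1 - y))) by (apply Rmult_le_pos; nra).
    replace (p + p * y * ys + q * y * ys * (y + ys))
      with ((1 - y) * p + y * ((1 + ys) * (p + q * ys)) - q * ys * (y * (1 - y))) by ring.
    nra. }
  exists (m / 2); split; [lra|].
  intros x Hx.
  exists (Q (2 * x - 1) / (2 * ys)); split.
  - specialize (HQm (2 * x - 1) ltac:(lra)).
    apply (Rmult_le_reg_r (2 * ys)); [lra|].
    replace (Q (2 * x - 1) / (2 * ys) * (2 * ys)) with (Q (2 * x - 1)) by (field; lra).
    nra.
  - apply (Rmult_eq_reg_l (2 * ys)); [|lra].
    rewrite HQ; field; lra.
Qed.

Lemma fx_toward_xs :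
  exists q, 0 < q /\ forall e gam x r,
    0 <= e -> gam * ((a + b + c + d) / 4) <= q * e / 2 ->
    1 / 2 <= x <= 1 -> 1 - gam <= r <= 1 ->
    (x <= xs - e -> q * e / 2 <= f x r) /\ (xs + e <= x -> f x r <= - (q * e / 2)).
Proof.
  destruct fx_top_factor as [q [Hq Hfactor]].
  exists q; split; [exact Hq|]; intros e gam x r He Hgam Hx Hr.
  destruct (Hfactor x Hx) as [k [Hk Hf1]].
  destruct (fx_sandwich_top x r ltac:(lra) ltac:(lra)) as [Hlo Hhi].
  assert ((1 - r) * ((a + b + c + d) / 4) <= gam * ((a + b + c + d) / 4))
    by (apply Rmult_le_compat_r; lra).
  rewrite Hf1 in Hlo, Hhi; split; intros; nra.
Qed.

Section Convergence.

Variables X Rr : R -> R.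
Hypothesis Htraj : is_trajectory a b c d mu u X Rr.
Hypothesis HX : forall t, 0 <= t -> 0 <= X t <= 1.
Hypothesis HR : forall t, 0 <= t -> 0 < Rr t <= 1.

Lemma trajectory_converges_after_half T0 :
  0 <= T0 -> 1 / 2 < X T0 -> converges_to X Rr xs 1.
Proof.
  intros HT0 HXT0 eps Heps.
  destruct (trajectory_stays_right X Rr Htraj HR T0 HT0 HXT0) as [xlo [Hxlo Hright]].
  destruct fx_toward_xs as [q [Hq Htoward]].
  set (m := q * (eps / 2) / 2).
  assert (Hm : 0 < m) by (unfold m; nra).
  destruct (small_positive_bound (eps / 2) m ((a + b + c + d) / 4))
    as [gam [Hgam [Hgam_eps HgamD]]]; try lra.
  destruct (trajectory_r_eventually_near_1 X Rr Htraj HR T0 HT0 HXT0 gam Hgam)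
    as [T1 [HT1 HRT1]].
  assert (Hnear : forall t, T1 <= t -> 1 / 2 <= X t <= 1 /\ 1 - gam <= Rr t <= 1).
  { intros t Ht; destruct (Hright t ltac:(lra)) as [HXt _].
    specialize (HX t ltac:(lra)); specialize (HR t ltac:(lra)); specialize (HRT1 t Ht); lra. }
  assert (HXd := has_derivative_from_later _ _ _ _ (Rle_trans _ _ _ HT0 HT1)
                   (trajectory_x_deriv X Rr Htraj)).
  destruct (eventually_above T1 X _ m (xs - eps / 2) HXd Hm) as [T2 [HT2 Hlo]].
  { intros t Ht HXt; destruct (Hnear t Ht) as [HXt' HRt].
    refine (proj1 (Htoward (eps / 2) gam (X t) (Rr t) _ _ _ _) _); unfold m in *; lra. }
  destruct (eventually_above T1 (fun t => -1 * X t + 0) _ m (- (xs + eps / 2))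
              (has_derivative_from_affine _ _ _ (-1) 0 HXd) Hm) as [T3 [HT3 Hhi]].
  { intros t Ht HXt; destruct (Hnear t Ht) as [HXt' HRt].
    enough (f (X t) (Rr t) <= - m) by lra.
    refine (proj2 (Htoward (eps / 2) gam (X t) (Rr t) _ _ _ _) _); unfold m in *; lra. }
  exists (Rmax T2 T3); intros t Ht.
  pose proof (Rmax_l T2 T3); pose proof (Rmax_r T2 T3).
  specialize (Hlo t ltac:(lra)); specialize (Hhi t ltac:(lra)); destruct (Hnear t ltac:(lra)).
  apply dist2_lt_of_Rabs_le; [lra | apply Rabs_le_between; lra | apply Rabs_le_between; lra].
Qed.

End Convergence.

Lemma top_equilibrium_lyap_stable : lyap_stable a b c d mu u xs 1.
Proof.
  intros eps Heps.
  destruct fx_toward_xs as [q [Hq Htoward]].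
  set (al := Rmin (eps / 2) ((xs - 1 / 2) / 2)).
  assert (Hal : 0 < al /\ al <= eps / 2 /\ al <= (xs - 1 / 2) / 2).
  { split; [unfold al; apply Rmin_case; lra | split; [apply Rmin_l | apply Rmin_r]]. }
  destruct (small_positive_bound (Rmin (eps / 2) (1 / 2)) (q * al / 2) ((a + b + c + d) / 4))
    as [be [Hbe [Hbe_eps HbeD]]]; [apply Rmin_case; lra | nra | lra |].
  pose proof (Rmin_l (eps / 2) (1 / 2)); pose proof (Rmin_r (eps / 2) (1 / 2)).
  exists (Rmin al be); split; [apply Rmin_case; lra|].
  intros X Rr Htr [HX0 HR0] Hdist t Ht.
  destruct (Rabs_lt_of_dist2_lt _ _ _ _ _ Hdist) as [HdX HdR].
  apply Rabs_lt_between in HdX, HdR.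
  pose proof (Rmin_l al be); pose proof (Rmin_r al be).
  destruct (trajectory_in_unit_square X Rr Htr ltac:(lra) ltac:(lra)) as [HX HR].
  destruct (trajectory_stays_right X Rr Htr HR 0 ltac:(lra) ltac:(lra))
    as [xlo [Hxlo Hright]].
  assert (Hnear : forall s, 0 <= s -> 1 / 2 <= X s <= 1 /\ 1 - be <= Rr s <= 1).
  { intros s Hs; destruct (Hright s Hs); specialize (HX s Hs); specialize (HR s Hs); lra. }
  assert (HXd := trajectory_x_deriv X Rr Htr).
  assert (Hlo : xs - al <= X t).
  { apply (stays_above 0 X _ 1 _ HXd); try lra.
    intros s Hs HXs; destruct (Hnear s Hs).
    enough (q * al / 2 <= f (X s) (Rr s)) by nra.
    refine (proj1 (Htoward al be (X s) (Rr s) _ _ _ _) _); lra. }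
  assert (Hhi : - (xs + al) <= -1 * X t + 0).
  { apply (stays_above 0 _ _ 1 _ (has_derivative_from_affine _ _ _ (-1) 0 HXd)); try lra.
    intros s Hs HXs; destruct (Hnear s Hs).
    enough (f (X s) (Rr s) <= - (q * al / 2)) by nra.
    refine (proj2 (Htoward al be (X s) (Rr s) _ _ _ _) _); lra. }
  destruct (Hnear t Ht).
  apply dist2_lt_of_Rabs_le; [lra | apply Rabs_le_between; lra | apply Rabs_le_between; lra].
Qed.

Lemma top_equilibrium_almost_globally_stable : almost_globally_stable a b c d mu u xs 1.
Proof.
  split; [split|].
  - exact top_equilibrium_lyap_stable.
  - exists (Rmin (xs - 1 / 2) (1 / 2)); split; [apply Rmin_case; lra|].
    intros X Rr Htr [HX0 HR0] Hdist.
    destruct (Rabs_lt_of_dist2_lt _ _ _ _ _ Hdist) as [HdX HdR].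
    apply Rabs_lt_between in HdX, HdR.
    pose proof (Rmin_l (xs - 1 / 2) (1 / 2)); pose proof (Rmin_r (xs - 1 / 2) (1 / 2)).
    destruct (trajectory_in_unit_square X Rr Htr ltac:(lra) ltac:(lra)) as [HX HR].
    apply (trajectory_converges_after_half X Rr Htr HX HR 0); lra.
  - intros X Rr Htr [HX0 HR0] HnBt HnBb.
    assert (HR0' : 0 < Rr 0 < 1).
    { unfold in_Bt, in_Bb in *.
      split; apply Rnot_le_lt; intros Hle; [apply HnBb | apply HnBt]; split; auto; lra. }
    destruct (trajectory_in_unit_square X Rr Htr ltac:(lra) ltac:(lra)) as [HX HR].
    destruct (trajectory_crosses_half X Rr Htr HX HR ltac:(lra)) as [T0 [HT0 HXT0]].
    exact (trajectory_converges_after_half X Rr Htr HX HR T0 HT0 HXT0).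
Qed.

End TopEquilibrium.

End VectorField.

Theorem theorem21 (a b c d mu u xs : R) :
  0 < a -> 0 < b -> 0 < c -> 0 < d -> a + c <= b + d ->
  0 < mu <= 1 -> (c + d) / 2 < u ->
  1 / 2 < xs < 1 -> fx a b c d mu u xs 1 = 0 ->
  almost_globally_stable a b c d mu u xs 1.
Proof.
  intros Ha Hb Hc Hd _ [Hmu _] Hu Hxs Hfxs.
  exact (top_equilibrium_almost_globally_stable a b c d mu u Ha Hb Hc Hd Hmu Hu xs Hxs Hfxs).
Qed.
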